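(* Let $k\ge 0$, let $f\in C^1(\mathbb{R})$, and consider the Zakharov–Kuznetsov equation $u_t+f(u)_x+u_{xxx}+u_{xyy}=0$ on the rectangle $\Omega=[a,b]\times[c,d]$ with periodic boundary conditions, discretized by the semi-discrete ultra-weak DG scheme described in the context. Then the numerical solution $u^h(\cdot,\cdot,t)\in \mathbf{V}_h^k$ satisfies $$\frac{d}{dt}\int_{\Omega}\big(u^h(x,y,t)\big)^2\,dx\,dy\le 0 .$$
   Context: Mesh: $a=x_{1/2}<x_{3/2}<\dots<x_{N_x+1/2}=b$, $c=y_{1/2}<\dots<y_{N_y+1/2}=d$, $I_i=[x_{i-1/2},x_{i+1/2}]$, $J_j=[y_{j-1/2},y_{j+1/2}]$, $K_{i,j}=I_i\times J_j$ (a shape-regular partition into rectangles). $\mathbf{V}_h^k=\{v\in L^2(\Omega): v|_{K_{i,j}}\in Q^k(K_{i,j})\ \forall i,j\}$, where $Q^k$ denotes tensor-product polynomials of degree at most $k$ in each variable. For $w\in\mathbf{V}_h^k$ (and its piecewise derivatives), $w(x_{i+1/2}^{\pm},y)$, $w(x,y_{j+1/2}^{\pm})$, $w(x_{i+1/2}^{\pm},y_{j+1/2}^{\pm})$ denote one-sided limits (traces from the right/above for $+$, from the left/below for $-$). Periodicity: indices are taken periodically, i.e. the interfaces $x_{1/2}$ and $x_{N_x+1/2}$ are identified (so e.g. $w(x_{N_x+1/2}^+,y)=w(x_{1/2}^+,y)$, $w(x_{1/2}^-,y)=w(x_{N_x+1/2}^-,y)$), and similarly in $y$. All sums below run over $i=1,\dots,N_x$,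 $j=1,\dots,N_y$; volume integrals $\int_\Omega$ of derivatives of $v$ are understood cellwise. Numerical flux for convection (global Lax–Friedrichs): $\hat f_{i+1/2}(y)=\tfrac12\big(f(u^h(x_{i+1/2}^+,y))+f(u^h(x_{i+1/2}^-,y))\big)-\alpha\big(u^h(x_{i+1/2}^+,y)-u^h(x_{i+1/2}^-,y)\big)$, with $\alpha=\max|f'(u)|$ (maximum over the range of values involved, so that $|f'(w)|\le\alpha$ for all relevant $w$). Scheme: find $u^h(t)\in\mathbf{V}_h^k$ such that for all $v\in\mathbf{V}_h^k$, $$\int_\Omega u^h_t v=\int_\Omega f(u^h)v_x+\int_\Omega u^h v_{xxx}+\int_\Omega u^h v_{xyy}$$ $$-\sum_{i,j}\int_{J_j}\big[\hat f_{i+1/2}(y)v(x_{i+1/2}^-,y)-\hat f_{i-1/2}(y)v(x_{i-1/2}^+,y)\big]dy$$ $$-\sum_{i,j}\int_{J_j}\big[u^h_{xx}(x_{i+1/2}^+,y)v(x_{i+1/2}^-,y)-u^h_{xx}(x_{i-1/2}^+,y)v(x_{i-1/2}^+,y)\big]dy$$ $$+\sum_{i,j}\int_{J_j}\big[u^h_{x}(x_{i+1/2}^+,y)v_x(x_{i+1/2}^-,y)-u^h_{x}(x_{i-1/2}^+,y)v_x(x_{i-1/2}^+,y)\big]dy$$ $$-\sum_{i,j}\int_{J_j}\big[u^h(x_{i+1/2}^-,y)v_{xx}(x_{i+1/2}^-,y)-u^h(x_{i-1/2}^-,y)v_{xx}(x_{i-1/2}^+,y)\big]dy$$ $$+\sum_{i,j}\int_{I_i}\big[u^h_y(x,y_{j+1/2}^+)v_x(x,y_{j+1/2}^-)-u^h_y(x,y_{j-1/2}^+)v_x(x,y_{j-1/2}^+)\big]dx$$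 $$+\sum_{i,j}\big[-u^h_y(x_{i+1/2}^-,y_{j+1/2}^+)v(x_{i+1/2}^-,y_{j+1/2}^-)+u^h_y(x_{i-1/2}^-,y_{j+1/2}^+)v(x_{i-1/2}^+,y_{j+1/2}^-)$$ $$\qquad+u^h_y(x_{i+1/2}^-,y_{j-1/2}^+)v(x_{i+1/2}^-,y_{j-1/2}^+)-u^h_y(x_{i-1/2}^-,y_{j-1/2}^+)v(x_{i-1/2}^+,y_{j-1/2}^+)\big]$$ $$-\sum_{i,j}\int_{J_j}\big[u^h(x_{i+1/2}^+,y)v_{yy}(x_{i+1/2}^-,y)-u^h(x_{i-1/2}^+,y)v_{yy}(x_{i-1/2}^+,y)\big]dy$$ $$+\sum_{i,j}\big[u^h(x_{i+1/2}^+,y_{j+1/2}^-)v_y(x_{i+1/2}^-,y_{j+1/2}^-)-u^h(x_{i+1/2}^+,y_{j-1/2}^-)v_y(x_{i+1/2}^-,y_{j-1/2}^+)$$ $$\qquad-u^h(x_{i-1/2}^+,y_{j+1/2}^-)v_y(x_{i-1/2}^+,y_{j+1/2}^-)+u^h(x_{i-1/2}^+,y_{j-1/2}^-)v_y(x_{i-1/2}^+,y_{j-1/2}^+)\big]$$ $$-\sum_{i,j}\int_{I_i}\big[u^h(x,y_{j+1/2}^-)v_{xy}(x,y_{j+1/2}^-)-u^h(x,y_{j-1/2}^-)v_{xy}(x,y_{j-1/2}^+)\big]dx.$$ This is a system of ODEs for the coefficients of $u^h$, whose solution is assumed to exist and be $C^1$ in $t$. *)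

From Stdlib Require Import Reals Lra Lia.
From Coquelicot Require Import Coquelicot.
Open Scope R_scope.

Fixpoint sumR (n : nat) (g : nat -> R) : R :=
  match n with
  | O => 0
  | S n' => sumR n' g + g n'
  end.

(* dfact m d = m (m-1) ... (m-d+1) (falling factorial, as a real; 0 if d > m) *)
Fixpoint dfact (m d : nat) : R :=
  match d with
  | O => 1
  | S d' => dfact m d' * INR (m - d')
  end.

(* A polynomial in Q^k, given by its coefficients c m n of x^m y^n (0 <= m,n <= k). *)
Definition poly2 := nat -> nat -> R.

(* The partial derivative d^dx/dx^dx d^dy/dy^dy of sum_{m,n<=k} c m n x^m y^n, at (x,y). *)
Definition peval (k : nat) (c : poly2) (dx dy : nat) (x y : R) : R :=
  sumR (S k) (fun m => sumR (S k) (fun n =>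
    c m n * dfact m dx * dfact n dy * x ^ (m - dx)%nat * y ^ (n - dy)%nat)).

(* An element of V_h^k: cell (p,q) (0-based, p < Nx, q < Ny; cell (p,q) is
   K = [xs p, xs (p+1)] x [ys q, ys (q+1)]) carries the polynomial W p q. *)
Definition dgfun := nat -> nat -> poly2.

Definition ev (k : nat) (W : dgfun) (p q dx dy : nat) (x y : R) : R :=
  peval k (W p q) dx dy x y.

Definition nextI (N p : nat) : nat := Nat.modulo (S p) N.
Definition prevI (N p : nat) : nat := Nat.modulo (p + N - 1) N.

Definition Int2 (x0 x1 y0 y1 : R) (g : R -> R -> R) : R :=
  RInt (fun x => RInt (fun y => g x y) y0 y1) x0 x1.

(* global Lax-Friedrichs flux, up = u^+, um = u^- *)
Definition LF (f : R -> R) (alpha up um : R) : R :=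
  (f up + f um) / 2 - alpha * (up - um).

Definition l2ip (k Nx Ny : nat) (xs ys : nat -> R) (U V : dgfun) : R :=
  sumR Nx (fun p => sumR Ny (fun q =>
    Int2 (xs p) (xs (S p)) (ys q) (ys (S q))
      (fun x y => ev k U p q 0%nat 0%nat x y * ev k V p q 0%nat 0%nat x y))).

(* Dictionary (paper 1-based cell i <-> 0-based p = i-1):
   x_{i+1/2} = xr, x_{i-1/2} = xl; a trace from the right of x_{i+1/2} is the
   polynomial of the right neighbour pR evaluated at its left end xlR (periodic),
   a trace from the left of x_{i-1/2} is the polynomial of pL at its right end xrL;
   similarly in y. *)
Definition scheme_rhs (k Nx Ny : nat) (xs ys : nat -> R) (f : R -> R) (alpha : R)
    (U V : dgfun) : R :=
  sumR Nx (fun p => sumR Ny (fun q =>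
    let xl := xs p in let xr := xs (S p) in
    let yl := ys q in let yr := ys (S q) in
    let pR := nextI Nx p in let pL := prevI Nx p in
    let qR := nextI Ny q in let qL := prevI Ny q in
    let xlR := xs pR in let xrL := xs (S pL) in
    let ylR := ys qR in let yrL := ys (S qL) in
    let u := ev k U in let v := ev k V in
      Int2 xl xr yl yr (fun x y => f (u p q 0%nat 0%nat x y) * v p q 1%nat 0%nat x y)
    + Int2 xl xr yl yr (fun x y => u p q 0%nat 0%nat x y * v p q 3%nat 0%nat x y)
    + Int2 xl xr yl yr (fun x y => u p q 0%nat 0%nat x y * v p q 1%nat 2%nat x y)
    - RInt (fun y => LF f alpha (u pR q 0%nat 0%nat xlR y) (u p q 0%nat 0%nat xr y) * v p q 0%nat 0%nat xr y
                   - LF f alpha (u p q 0%nat 0%nat xl y) (u pL q 0%nat 0%nat xrL y) * v p q 0%nat 0%nat xl y) yl yr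
    - RInt (fun y => u pR q 2%nat 0%nat xlR y * v p q 0%nat 0%nat xr y
                   - u p q 2%nat 0%nat xl y * v p q 0%nat 0%nat xl y) yl yr
    + RInt (fun y => u pR q 1%nat 0%nat xlR y * v p q 1%nat 0%nat xr y
                   - u p q 1%nat 0%nat xl y * v p q 1%nat 0%nat xl y) yl yr
    - RInt (fun y => u p q 0%nat 0%nat xr y * v p q 2%nat 0%nat xr y
                   - u pL q 0%nat 0%nat xrL y * v p q 2%nat 0%nat xl y) yl yr
    + RInt (fun x => u p qR 0%nat 1%nat x ylR * v p q 1%nat 0%nat x yr
                   - u p q 0%nat 1%nat x yl * v p q 1%nat 0%nat x yl) xl xr
    + ( - u p qR 0%nat 1%nat xr ylR * v p q 0%nat 0%nat xr yr
        + u pL qR 0%nat 1%nat xrL ylR * v p q 0%nat 0%nat xl yr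
        + u p q 0%nat 1%nat xr yl * v p q 0%nat 0%nat xr yl
        - u pL q 0%nat 1%nat xrL yl * v p q 0%nat 0%nat xl yl)
    - RInt (fun y => u pR q 0%nat 0%nat xlR y * v p q 0%nat 2%nat xr y
                   - u p q 0%nat 0%nat xl y * v p q 0%nat 2%nat xl y) yl yr
    + ( u pR q 0%nat 0%nat xlR yr * v p q 0%nat 1%nat xr yr
        - u pR qL 0%nat 0%nat xlR yrL * v p q 0%nat 1%nat xr yl
        - u p q 0%nat 0%nat xl yr * v p q 0%nat 1%nat xl yr
        + u p qL 0%nat 0%nat xl yrL * v p q 0%nat 1%nat xl yl)
    - RInt (fun x => u p q 0%nat 0%nat x yr * v p q 1%nat 1%nat x yr
                   - u p qL 0%nat 0%nat x yrL * v p q 1%nat 1%nat x yl) xl xr)).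

Definition in_value_range (k Nx Ny : nat) (xs ys : nat -> R) (W : dgfun) (w : R) : Prop :=
  exists p q x y p' q' x' y',
    (p < Nx)%nat /\ (q < Ny)%nat /\ (p' < Nx)%nat /\ (q' < Ny)%nat /\
    xs p <= x <= xs (S p) /\ ys q <= y <= ys (S q) /\
    xs p' <= x' <= xs (S p') /\ ys q' <= y' <= ys (S q') /\
    ev k W p q 0%nat 0%nat x y <= w <= ev k W p' q' 0%nat 0%nat x' y'.

From Stdlib Require Import Reals Lra Lia.
From Coquelicot Require Import Coquelicot.
Open Scope R_scope.

(* Testing the scheme with v = u^h gives d/dt ||u^h||^2 = 2 B(u^h, u^h), where B is
   the right-hand side.  In each cell the volume terms are integrated by parts
   (f(u) u_x and u u_xxx in x, u u_xyy in x and y), which leaves only traces on the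
   cell boundary.  Summed over the periodic mesh, the corner values and the
   tangential traces on horizontal edges telescope away; the traces of u_x and u_y
   on each vertical edge combine into -1/2 [u_x]^2 and -1/2 [u_y]^2; and the
   convective traces give F(u^-) - F(u^+) - \hat f (u^- - u^+) with F' = f, which is
   nonpositive for the Lax-Friedrichs flux with alpha >= max |f'| because the
   trapezoid rule integrates f on [u^+, u^-] with error at most alpha/2 (u^- - u^+)^2. *)

Lemma sumR_ext n (g h : nat -> R) :
  (forall i, (i < n)%nat -> g i = h i) -> sumR n g = sumR n h.
Proof.
  induction n as [|n IH]; intros E; simpl; [reflexivity|].
  rewrite IH by (intros; apply E; lia). rewrite E by lia. reflexivity.
Qed.

Lemma sumR_plus n (g h : nat -> R) : sumR n (fun i => g i + h i) = sumR n g + sumR n h.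
Proof. induction n as [|n IH]; simpl; [ring | rewrite IH; ring]. Qed.

Lemma sumR_minus n (g h : nat -> R) : sumR n (fun i => g i - h i) = sumR n g - sumR n h.
Proof. induction n as [|n IH]; simpl; [ring | rewrite IH; ring]. Qed.

Lemma sumR_nonpos n (g : nat -> R) : (forall i, (i < n)%nat -> g i <= 0) -> sumR n g <= 0.
Proof.
  induction n as [|n IH]; intros H; simpl; [lra|].
  assert (g n <= 0) by (apply H; lia).
  assert (sumR n g <= 0) by (apply IH; intros; apply H; lia).
  lra.
Qed.

Lemma sumR_Sl n (g : nat -> R) : sumR (S n) g = g O + sumR n (fun i => g (S i)).
Proof.
  induction n as [|n IH]; [simpl; ring|].
  change (sumR (S (S n)) g) with (sumR (S n) g + g (S n)). rewrite IH. simpl. ring.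
Qed.

Lemma sumR_mult_r n (g : nat -> R) c : sumR n g * c = sumR n (fun i => g i * c).
Proof. induction n as [|n IH]; simpl; [ring | rewrite <- IH; ring]. Qed.

Lemma sumR_prod n m (g h : nat -> R) :
  sumR n g * sumR m h = sumR n (fun i => sumR m (fun j => g i * h j)).
Proof.
  rewrite sumR_mult_r. apply sumR_ext; intros.
  rewrite Rmult_comm, sumR_mult_r. apply sumR_ext; intros; ring.
Qed.

Lemma nextI_lt N p : (1 <= N)%nat -> (nextI N p < N)%nat.
Proof. intros. apply Nat.mod_upper_bound. lia. Qed.

Lemma prevI_nextI N p : (p < N)%nat -> prevI N (nextI N p) = p.
Proof.
  intros Hp. unfold prevI, nextI. destruct (Nat.eq_dec (S p) N) as [E|E].
  - subst. rewrite Nat.Div0.mod_same. replace (0 + S p - 1)%nat with p by lia.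
    apply Nat.mod_small; lia.
  - rewrite (Nat.mod_small (S p)) by lia. replace (S p + N - 1)%nat with (p + 1 * N)%nat by lia.
    rewrite Nat.Div0.mod_add. apply Nat.mod_small; lia.
Qed.

Lemma sumR_nextI N (g : nat -> R) : (1 <= N)%nat -> sumR N (fun p => g (nextI N p)) = sumR N g.
Proof.
  intros HN. destruct N as [|n]; [lia|].
  change (sumR (S n) (fun p => g (nextI (S n) p)))
    with (sumR n (fun p => g (nextI (S n) p)) + g (nextI (S n) n)).
  replace (nextI (S n) n) with O by (unfold nextI; rewrite Nat.Div0.mod_same; reflexivity).
  rewrite sumR_Sl, (sumR_ext n _ (fun i => g (S i))); [ring|].
  intros. unfold nextI. rewrite Nat.mod_small by lia. reflexivity.
Qed.

Definition sum2 (Nx Ny : nat) (A : nat -> nat -> R) : R :=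
  sumR Nx (fun p => sumR Ny (fun q => A p q)).

Section CellSums.
Variables Nx Ny : nat.
Hypotheses (HNx : (1 <= Nx)%nat) (HNy : (1 <= Ny)%nat).

Lemma sum2_ext (A B : nat -> nat -> R) :
  (forall p q, (p < Nx)%nat -> (q < Ny)%nat -> A p q = B p q) -> sum2 Nx Ny A = sum2 Nx Ny B.
Proof. intros E. apply sumR_ext; intros. apply sumR_ext; intros. auto. Qed.

Lemma sum2_plus (A B : nat -> nat -> R) :
  sum2 Nx Ny (fun p q => A p q + B p q) = sum2 Nx Ny A + sum2 Nx Ny B.
Proof. unfold sum2. rewrite <- sumR_plus. apply sumR_ext; intros. apply sumR_plus. Qed.

Lemma sum2_minus (A B : nat -> nat -> R) :
  sum2 Nx Ny (fun p q => A p q - B p q) = sum2 Nx Ny A - sum2 Nx Ny B.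
Proof. unfold sum2. rewrite <- sumR_minus. apply sumR_ext; intros. apply sumR_minus. Qed.

Lemma sum2_nonpos (A : nat -> nat -> R) :
  (forall p q, (p < Nx)%nat -> (q < Ny)%nat -> A p q <= 0) -> sum2 Nx Ny A <= 0.
Proof. intros H. apply sumR_nonpos; intros. apply sumR_nonpos; intros. auto. Qed.

Lemma sum2_nextI_x (A : nat -> nat -> R) :
  sum2 Nx Ny (fun p q => A (nextI Nx p) q) = sum2 Nx Ny A.
Proof. exact (sumR_nextI Nx (fun p => sumR Ny (fun q => A p q)) HNx). Qed.

Lemma sum2_nextI_y (A : nat -> nat -> R) :
  sum2 Nx Ny (fun p q => A p (nextI Ny q)) = sum2 Nx Ny A.
Proof. apply sumR_ext; intros. exact (sumR_nextI Ny (fun q => A i q) HNy). Qed.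

Lemma sum2_pair_x (Rt Lt : nat -> nat -> R) :
  sum2 Nx Ny (fun p q => Rt p q + Lt p q) = sum2 Nx Ny (fun p q => Rt p q + Lt (nextI Nx p) q).
Proof. rewrite !sum2_plus, sum2_nextI_x. reflexivity. Qed.

Lemma sum2_pair_y (Up Dn : nat -> nat -> R) :
  sum2 Nx Ny (fun p q => Up p q + Dn p q) = sum2 Nx Ny (fun p q => Up p q + Dn p (nextI Ny q)).
Proof. rewrite !sum2_plus, sum2_nextI_y. reflexivity. Qed.

Lemma sum2_interface_x_nonpos (Rt Lt : nat -> nat -> R) :
  (forall p q, (p < Nx)%nat -> (q < Ny)%nat -> Rt p q + Lt (nextI Nx p) q <= 0) ->
  sum2 Nx Ny (fun p q => Rt p q + Lt p q) <= 0.
Proof. intros H. rewrite sum2_pair_x. apply sum2_nonpos, H. Qed.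

End CellSums.

(** * Calculus in one and two variables *)

Lemma is_derive_val (g : R -> R) (x l l' : R) : is_derive g x l -> l = l' -> is_derive g x l'.
Proof. intros H <-. exact H. Qed.

Lemma is_derive_Rplus (g h : R -> R) (x dg dh : R) :
  is_derive g x dg -> is_derive h x dh -> is_derive (fun y => g y + h y) x (dg + dh).
Proof. exact (is_derive_plus g h x dg dh). Qed.

Lemma is_derive_Rminus (g h : R -> R) (x dg dh : R) :
  is_derive g x dg -> is_derive h x dh -> is_derive (fun y => g y - h y) x (dg - dh).
Proof. exact (is_derive_minus g h x dg dh). Qed.

Lemma is_derive_Ropp (g : R -> R) (x dg : R) :
  is_derive g x dg -> is_derive (fun y => - g y) x (- dg).
Proof. exact (is_derive_opp g x dg). Qed.

Lemma is_derive_Rmult (g h : R -> R) (x dg dh : R) :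
  is_derive g x dg -> is_derive h x dh ->
  is_derive (fun y => g y * h y) x (dg * h x + g x * dh).
Proof. intros Hg Hh. apply (is_derive_mult g h x dg dh Hg Hh). intros; apply Rmult_comm. Qed.

Lemma is_derive_Rconst (c x : R) : is_derive (fun _ => c) x 0.
Proof. exact (is_derive_const c x). Qed.

Lemma is_derive_Rid (x : R) : is_derive (fun y => y) x 1.
Proof. exact (is_derive_id x). Qed.

Lemma is_derive_Rdiv_const (g : R -> R) (x dg c : R) :
  is_derive g x dg -> is_derive (fun y => g y / c) x (dg / c).
Proof.
  intros. unfold Rdiv. eapply is_derive_val.
  - apply is_derive_Rmult; [eassumption | apply is_derive_Rconst].
  - cbv beta. ring.
Qed.

Lemma is_derive_Rcomp (phi phi' g : R -> R) (x dg : R) :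
  (forall w, is_derive phi w (phi' w)) -> is_derive g x dg ->
  is_derive (fun y => phi (g y)) x (phi' (g x) * dg).
Proof.
  intros Hphi Hg. eapply is_derive_val; [apply (is_derive_comp phi g x _ _ (Hphi (g x)) Hg)|].
  unfold scal; simpl; unfold mult; simpl. ring.
Qed.

Lemma is_derive_sumR n (g : nat -> R -> R) (dg : nat -> R) (x : R) :
  (forall i, is_derive (g i) x (dg i)) ->
  is_derive (fun z => sumR n (fun i => g i z)) x (sumR n dg).
Proof. intros H; induction n; simpl; [apply is_derive_Rconst | apply is_derive_Rplus; auto]. Qed.

Lemma is_derive_continuous (g : R -> R) (x l : R) : is_derive g x l -> continuous g x.
Proof. intros H. apply (@ex_derive_continuous R_AbsRing R_NormedModule). exists l. exact H. Qed.

Lemma continuous_Rplus (g h : R -> R) (x : R) :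
  continuous g x -> continuous h x -> continuous (fun y => g y + h y) x.
Proof. exact (continuous_plus g h x). Qed.

Lemma continuous_Rminus (g h : R -> R) (x : R) :
  continuous g x -> continuous h x -> continuous (fun y => g y - h y) x.
Proof. exact (continuous_minus g h x). Qed.

Lemma continuous_Rmult (g h : R -> R) (x : R) :
  continuous g x -> continuous h x -> continuous (fun y => g y * h y) x.
Proof. exact (continuous_mult g h x). Qed.

Lemma continuous_Ropp (g : R -> R) (x : R) : continuous g x -> continuous (fun y => - g y) x.
Proof. exact (continuous_opp g x). Qed.

Lemma continuous_Rdiv_const (g : R -> R) (x c : R) :
  continuous g x -> continuous (fun y => g y / c) x.
Proof. intros. apply continuous_Rmult; [assumption | apply continuous_const]. Qed.

Lemma continuous_Rcomp (phi g : R -> R) (x : R) :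
  (forall w, continuous phi w) -> continuous g x -> continuous (fun y => phi (g y)) x.
Proof. intros Hphi Hg. apply (continuous_comp g phi x Hg (Hphi (g x))). Qed.

Lemma ev_derive_x k W p q dx dy x y :
  is_derive (fun z => ev k W p q dx dy z y) x (ev k W p q (S dx) dy x y).
Proof.
  apply is_derive_sumR; intro m. apply is_derive_sumR; intro n.
  eapply is_derive_val; [auto_derive; auto|].
  simpl dfact. replace (pred (m - dx)) with (m - S dx)%nat by lia. ring.
Qed.

Lemma ev_derive_y k W p q dx dy x y :
  is_derive (fun z => ev k W p q dx dy x z) y (ev k W p q dx (S dy) x y).
Proof.
  apply is_derive_sumR; intro m. apply is_derive_sumR; intro n.
  eapply is_derive_val; [auto_derive; auto|].
  simpl dfact. replace (pred (n - dy)) with (n - S dy)%nat by lia. ring.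
Qed.

Lemma ev_continuous_x k W p q dx dy x y : continuous (fun z => ev k W p q dx dy z y) x.
Proof. eapply is_derive_continuous, ev_derive_x. Qed.

Lemma ev_continuous_y k W p q dx dy x y : continuous (fun z => ev k W p q dx dy x z) y.
Proof. eapply is_derive_continuous, ev_derive_y. Qed.

Ltac continuity_step :=
  match goal with
  | |- continuous (fun y => @?a y + @?b y) _ => apply continuous_Rplus
  | |- continuous (fun y => @?a y - @?b y) _ => apply continuous_Rminus
  | |- continuous (fun y => @?a y * @?b y) _ => apply continuous_Rmult
  | |- continuous (fun y => @?a y / ?c) _ => apply continuous_Rdiv_const
  | |- continuous (fun y => - @?a y) _ => apply continuous_Ropp
  | |- continuous (fun y => ev _ _ _ _ _ _ _ y) _ => apply ev_continuous_y
  | |- continuous (ev _ _ _ _ _ _ _) _ => apply ev_continuous_y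
  | |- continuous (fun y => ev _ _ _ _ _ _ y _) _ => apply ev_continuous_x
  | H : forall w, continuous ?F w |- continuous (fun y => ?F (@?g y)) _ =>
      apply (continuous_Rcomp F); [exact H|]
  | |- continuous (fun y => y) _ => apply continuous_id
  | |- continuous (fun y => ?c) _ => apply continuous_const
  end.
Ltac solve_continuous := solve [intros; repeat continuity_step].

Ltac derive_step :=
  match goal with
  | |- is_derive (fun y => @?a y + @?b y) _ _ => apply is_derive_Rplus
  | |- is_derive (fun y => @?a y - @?b y) _ _ => apply is_derive_Rminus
  | |- is_derive (fun y => @?a y * @?b y) _ _ => apply is_derive_Rmult
  | |- is_derive (fun y => @?a y / ?c) _ _ => apply is_derive_Rdiv_const
  | |- is_derive (fun y => - @?a y) _ _ => apply is_derive_Ropp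
  | |- is_derive (fun y => ev _ _ _ _ _ _ _ y) _ _ => apply ev_derive_y
  | |- is_derive (ev _ _ _ _ _ _ _) _ _ => apply ev_derive_y
  | |- is_derive (fun y => ev _ _ _ _ _ _ y _) _ _ => apply ev_derive_x
  | H : forall w, is_derive ?F w _ |- is_derive ?F _ _ => apply H
  | H : forall w, is_derive ?F w _ |- is_derive (fun y => ?F (@?g y)) _ _ =>
      eapply (is_derive_Rcomp F); [exact H|]
  | |- is_derive (fun y => y) _ _ => apply is_derive_Rid
  | |- is_derive (fun y => ?c) _ _ => apply is_derive_Rconst
  end.
Ltac solve_derive := eapply is_derive_val; [repeat derive_step | cbv beta; field].

Lemma ex_RInt_continuous_R (g : R -> R) a b : (forall y, continuous g y) -> ex_RInt g a b.
Proof. intros. apply (@ex_RInt_continuous R_CompleteNormedModule). auto. Qed.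

Lemma RInt_merge_plus (g h : R -> R) a b :
  (forall y, continuous g y) -> (forall y, continuous h y) ->
  RInt g a b + RInt h a b = RInt (fun y => g y + h y) a b.
Proof.
  intros Hg Hh. symmetry.
  exact (RInt_plus g h a b (ex_RInt_continuous_R g a b Hg) (ex_RInt_continuous_R h a b Hh)).
Qed.

Lemma RInt_merge_minus (g h : R -> R) a b :
  (forall y, continuous g y) -> (forall y, continuous h y) ->
  RInt g a b - RInt h a b = RInt (fun y => g y - h y) a b.
Proof.
  intros Hg Hh. symmetry.
  exact (RInt_minus g h a b (ex_RInt_continuous_R g a b Hg) (ex_RInt_continuous_R h a b Hh)).
Qed.

Lemma RInt_ext_R (g h : R -> R) a b : (forall y, g y = h y) -> RInt g a b = RInt h a b.
Proof. intros E. apply RInt_ext. intros. apply E. Qed.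

Ltac merge_RInt :=
  repeat first [ rewrite RInt_merge_minus by solve_continuous
               | rewrite RInt_merge_plus by solve_continuous ].

Lemma RInt_FTC (h g : R -> R) a b :
  (forall y, is_derive h y (g y)) -> (forall y, continuous g y) -> RInt g a b = h b - h a.
Proof. intros. apply is_RInt_unique. apply (is_RInt_derive h g a b); auto. Qed.

Lemma RInt_nonpos (g : R -> R) a b :
  a <= b -> (forall y, continuous g y) -> (forall y, a < y < b -> g y <= 0) -> RInt g a b <= 0.
Proof.
  intros. replace 0 with (RInt (fun _ => 0) a b).
  - apply RInt_le; auto; apply ex_RInt_continuous_R; auto. intros; apply continuous_const.
  - rewrite RInt_const. unfold scal; simpl; unfold mult; simpl. ring.
Qed.

Lemma RInt_antiderivative (g : R -> R) a :
  (forall w, continuous g w) -> forall w, is_derive (fun z => RInt g a z) w (g w).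
Proof.
  intros Hg w. apply (is_derive_RInt g (fun z => RInt g a z) a w); [|auto].
  apply filter_forall. intros z. apply (@RInt_correct R_CompleteNormedModule).
  apply ex_RInt_continuous_R; auto.
Qed.

Definition continuous2 (h : R -> R -> R) : Prop := forall x y, continuity_2d_pt h x y.

Definition C1_x (h : R -> R -> R) : Prop :=
  continuous2 h /\ exists g, continuous2 g /\ forall x y, is_derive (fun z => h z y) x (g x y).

Lemma continuous2_plus g h : continuous2 g -> continuous2 h -> continuous2 (fun x y => g x y + h x y).
Proof. intros ? ? x y. apply continuity_2d_pt_plus; auto. Qed.

Lemma continuous2_minus g h : continuous2 g -> continuous2 h -> continuous2 (fun x y => g x y - h x y).
Proof. intros ? ? x y. apply continuity_2d_pt_minus; auto. Qed.

Lemma continuous2_mult g h : continuous2 g -> continuous2 h -> continuous2 (fun x y => g x y * h x y).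
Proof. intros ? ? x y. apply continuity_2d_pt_mult; auto. Qed.

Lemma continuous2_const c : continuous2 (fun _ _ => c).
Proof. intros x y. apply continuity_2d_pt_const. Qed.

Lemma continuous2_div_const h c : continuous2 h -> continuous2 (fun x y => h x y / c).
Proof. intros. apply continuous2_mult; [assumption | apply continuous2_const]. Qed.

Lemma continuous2_comp (phi : R -> R) h :
  (forall w, continuous phi w) -> continuous2 h -> continuous2 (fun x y => phi (h x y)).
Proof.
  intros Hphi Hh x y. apply continuity_2d_pt_filterlim.
  apply filterlim_comp with (G := locally (h x y));
    [apply continuity_2d_pt_filterlim, Hh | apply Hphi].
Qed.

Lemma continuous2_pow h n : continuous2 h -> continuous2 (fun x y => h x y ^ n).
Proof. intros H; induction n; simpl; [apply continuous2_const | apply continuous2_mult; auto]. Qed.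

Lemma continuous2_sumR n (h : nat -> R -> R -> R) :
  (forall i, continuous2 (h i)) -> continuous2 (fun x y => sumR n (fun i => h i x y)).
Proof. intros H; induction n; simpl; [apply continuous2_const | apply continuous2_plus; auto]. Qed.

Lemma continuous2_ev k W p q dx dy : continuous2 (fun x y => ev k W p q dx dy x y).
Proof.
  apply continuous2_sumR; intro m. apply continuous2_sumR; intro n.
  apply continuous2_mult; [apply continuous2_mult|]; try apply continuous2_pow.
  - apply continuous2_const.
  - intros x y; apply continuity_2d_pt_id1.
  - intros x y; apply continuity_2d_pt_id2.
Qed.

Lemma continuous2_slice_y h x y : continuous2 h -> continuous (fun z => h x z) y.
Proof.
  intros H. apply (continuous_comp_2 (fun _ => x) (fun z => z) h).
  - apply continuous_const.
  - apply continuous_id.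
  - apply continuity_2d_pt_filterlim, H.
Qed.

Lemma C1_x_plus g h : C1_x g -> C1_x h -> C1_x (fun x y => g x y + h x y).
Proof.
  intros [Cg [g' [Cg' Dg]]] [Ch [h' [Ch' Dh]]]. split; [apply continuous2_plus; auto|].
  exists (fun x y => g' x y + h' x y). split; [apply continuous2_plus; auto|].
  intros; apply is_derive_Rplus; auto.
Qed.

Lemma C1_x_mult g h : C1_x g -> C1_x h -> C1_x (fun x y => g x y * h x y).
Proof.
  intros [Cg [g' [Cg' Dg]]] [Ch [h' [Ch' Dh]]]. split; [apply continuous2_mult; auto|].
  exists (fun x y => g' x y * h x y + g x y * h' x y).
  split; [apply continuous2_plus; apply continuous2_mult; auto|].
  intros. eapply is_derive_val; [apply is_derive_Rmult; [apply Dg | apply Dh] | reflexivity].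
Qed.

Lemma C1_x_const c : C1_x (fun _ _ => c).
Proof.
  split; [apply continuous2_const|]. exists (fun _ _ => 0).
  split; [apply continuous2_const | intros; apply is_derive_Rconst].
Qed.

Lemma C1_x_comp (phi phi' : R -> R) h :
  (forall w, is_derive phi w (phi' w)) -> (forall w, continuous phi' w) ->
  C1_x h -> C1_x (fun x y => phi (h x y)).
Proof.
  intros Dphi Cphi' [Ch [h' [Ch' Dh]]].
  split; [apply continuous2_comp; auto; intros w; eapply is_derive_continuous, Dphi|].
  exists (fun x y => phi' (h x y) * h' x y).
  split; [apply continuous2_mult; [apply continuous2_comp|]; auto|].
  intros. eapply is_derive_val;
    [apply (is_derive_Rcomp phi phi'); [apply Dphi | apply Dh] | reflexivity].
Qed.

Lemma C1_x_sumR n (h : nat -> R -> R -> R) :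
  (forall i, C1_x (h i)) -> C1_x (fun x y => sumR n (fun i => h i x y)).
Proof. intros H; induction n; simpl; [apply C1_x_const | apply C1_x_plus; auto]. Qed.

Lemma C1_x_ev k W p q dx dy : C1_x (fun x y => ev k W p q dx dy x y).
Proof.
  split; [apply continuous2_ev|]. exists (fun x y => ev k W p q (S dx) dy x y).
  split; [apply continuous2_ev | intros; apply ev_derive_x].
Qed.

Lemma C1_x_monomial m n : C1_x (fun x y => x ^ m * y ^ n).
Proof.
  assert (Hx : C1_x (fun x _ => x)).
  { split; [intros x y; apply continuity_2d_pt_id1|]. exists (fun _ _ => 1).
    split; [apply continuous2_const | intros; apply is_derive_Rid]. }
  assert (Hy : C1_x (fun _ y => y)).
  { split; [intros x y; apply continuity_2d_pt_id2|]. exists (fun _ _ => 0).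
    split; [apply continuous2_const | intros; apply is_derive_Rconst]. }
  apply C1_x_mult; [induction m | induction n]; simpl;
    solve [apply C1_x_const | apply C1_x_mult; auto].
Qed.

Lemma is_derive_RInt_param2 h g y0 y1 x :
  continuous2 h -> continuous2 g -> (forall x y, is_derive (fun z => h z y) x (g x y)) ->
  is_derive (fun x => RInt (fun y => h x y) y0 y1) x (RInt (fun y => g x y) y0 y1).
Proof.
  intros Ch Cg D.
  assert (E : RInt (fun y => g x y) y0 y1 = RInt (fun t => Derive (fun u => h u t) x) y0 y1).
  { apply RInt_ext; intros. symmetry; apply is_derive_unique, D. }
  rewrite E. apply (is_derive_RInt_param h y0 y1 x).
  - apply filter_forall. intros. eexists; apply D.
  - intros t _. apply continuity_2d_pt_ext with (f := g); [|apply Cg].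
    intros. symmetry; apply is_derive_unique, D.
  - apply filter_forall. intros. apply ex_RInt_continuous_R.
    intros; apply continuous2_slice_y; auto.
Qed.

(* Obtained from differentiability in x, which is why the [Int2] lemmas below assume
   [C1_x] rather than [continuous2]. *)
Lemma continuous_RInt_param2 h y0 y1 x :
  C1_x h -> continuous (fun x => RInt (fun y => h x y) y0 y1) x.
Proof. intros [Ch [g [Cg D]]]. eapply is_derive_continuous, is_derive_RInt_param2; eauto. Qed.

Lemma Int2_FTC_x h g x0 x1 y0 y1 :
  continuous2 h -> (forall x y, is_derive (fun z => h z y) x (g x y)) -> C1_x g ->
  Int2 x0 x1 y0 y1 g = RInt (fun y => h x1 y - h x0 y) y0 y1.
Proof.
  intros Ch D Cg. unfold Int2.
  rewrite (RInt_FTC (fun x => RInt (fun y => h x y) y0 y1)).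
  - apply RInt_merge_minus; intros; apply continuous2_slice_y; auto.
  - intros. apply is_derive_RInt_param2; auto. apply Cg.
  - intros. apply continuous_RInt_param2; auto.
Qed.

Lemma Int2_ext g1 g2 x0 x1 y0 y1 :
  (forall x y, g1 x y = g2 x y) -> Int2 x0 x1 y0 y1 g1 = Int2 x0 x1 y0 y1 g2.
Proof. intros. unfold Int2. apply RInt_ext; intros. apply RInt_ext; intros. auto. Qed.

Lemma Int2_plus g1 g2 x0 x1 y0 y1 : C1_x g1 -> C1_x g2 ->
  Int2 x0 x1 y0 y1 (fun x y => g1 x y + g2 x y) = Int2 x0 x1 y0 y1 g1 + Int2 x0 x1 y0 y1 g2.
Proof.
  intros C1 C2. unfold Int2.
  rewrite RInt_merge_plus by (intros; apply continuous_RInt_param2; auto).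
  apply RInt_ext; intros. symmetry.
  apply RInt_merge_plus; intros; apply continuous2_slice_y; [apply C1 | apply C2].
Qed.

Lemma Int2_scal c g x0 x1 y0 y1 : C1_x g ->
  Int2 x0 x1 y0 y1 (fun x y => c * g x y) = c * Int2 x0 x1 y0 y1 g.
Proof.
  intros Cg. unfold Int2.
  rewrite (RInt_ext _ (fun x => c * RInt (fun y => g x y) y0 y1)).
  - apply (RInt_scal (V := R_CompleteNormedModule)).
    apply ex_RInt_continuous_R. intros; apply continuous_RInt_param2; auto.
  - intros. apply (RInt_scal (V := R_CompleteNormedModule)).
    apply ex_RInt_continuous_R. intros; apply continuous2_slice_y, Cg.
Qed.

Lemma Int2_sumR n (g : nat -> R -> R -> R) x0 x1 y0 y1 : (forall i, C1_x (g i)) ->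
  Int2 x0 x1 y0 y1 (fun x y => sumR n (fun i => g i x y))
  = sumR n (fun i => Int2 x0 x1 y0 y1 (g i)).
Proof.
  intros Cg. induction n as [|n IH]; simpl.
  - unfold Int2. rewrite (RInt_ext _ (fun _ => 0)), RInt_const.
    + unfold scal; simpl; unfold mult; simpl; ring.
    + intros. rewrite RInt_const. unfold scal; simpl; unfold mult; simpl; ring.
  - rewrite Int2_plus, IH; auto. apply C1_x_sumR; auto.
Qed.

Definition cell_moment (xs ys : nat -> R) (p q m n m' n' : nat) : R :=
  Int2 (xs p) (xs (S p)) (ys q) (ys (S q)) (fun x y => x ^ m * y ^ n * (x ^ m' * y ^ n')).

Lemma l2ip_expand k Nx Ny xs ys U V : l2ip k Nx Ny xs ys U V =
  sumR Nx (fun p => sumR Ny (fun q => sumR (S k) (fun m => sumR (S k) (fun m' =>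
    sumR (S k) (fun n => sumR (S k) (fun n' =>
      U p q m n * V p q m' n' * cell_moment xs ys p q m n m' n')))))).
Proof.
  unfold l2ip. apply sumR_ext; intros p _. apply sumR_ext; intros q _.
  rewrite (Int2_ext _ (fun x y => sumR (S k) (fun m => sumR (S k) (fun m' => sumR (S k) (fun n =>
    sumR (S k) (fun n' => U p q m n * V p q m' n' * (x ^ m * y ^ n * (x ^ m' * y ^ n')))))))).
  - assert (C : forall c m n m' n', C1_x (fun x y => c * (x ^ m * y ^ n * (x ^ m' * y ^ n')))).
    { intros. apply C1_x_mult; [apply C1_x_const | apply C1_x_mult; apply C1_x_monomial]. }
    rewrite Int2_sumR by (intros; repeat (apply C1_x_sumR; intros); apply C).
    apply sumR_ext; intros m _.
    rewrite Int2_sumR by (intros; repeat (apply C1_x_sumR; intros); apply C).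
    apply sumR_ext; intros m' _.
    rewrite Int2_sumR by (intros; repeat (apply C1_x_sumR; intros); apply C).
    apply sumR_ext; intros n _.
    rewrite Int2_sumR by (intros; apply C).
    apply sumR_ext; intros n' _.
    apply Int2_scal. apply C1_x_mult; apply C1_x_monomial.
  - intros x y. unfold ev, peval. rewrite sumR_prod. apply sumR_ext; intros m _.
    apply sumR_ext; intros m' _. rewrite sumR_prod. apply sumR_ext; intros n _.
    apply sumR_ext; intros n' _. simpl dfact. rewrite !Nat.sub_0_r. ring.
Qed.

Lemma l2ip_sym k Nx Ny xs ys U V : l2ip k Nx Ny xs ys U V = l2ip k Nx Ny xs ys V U.
Proof. apply sumR_ext; intros p _. apply sumR_ext; intros q _. apply Int2_ext; intros; ring. Qed.

Lemma l2ip_derive k Nx Ny xs ys (U Ut : R -> dgfun) t :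
  (forall p q m n, is_derive (fun s => U s p q m n) t (Ut t p q m n)) ->
  is_derive (fun s => l2ip k Nx Ny xs ys (U s) (U s)) t
    (l2ip k Nx Ny xs ys (Ut t) (U t) + l2ip k Nx Ny xs ys (U t) (Ut t)).
Proof.
  intros HU. apply (is_derive_ext (fun s => sumR Nx (fun p => sumR Ny (fun q =>
    sumR (S k) (fun m => sumR (S k) (fun m' => sumR (S k) (fun n => sumR (S k) (fun n' =>
      U s p q m n * U s p q m' n' * cell_moment xs ys p q m n m' n')))))))).
  { intros; symmetry; apply l2ip_expand. }
  eapply is_derive_val.
  { do 6 (apply is_derive_sumR; intro).
    apply is_derive_Rmult; [apply is_derive_Rmult; apply HU | apply is_derive_Rconst]. }
  rewrite !l2ip_expand.
  do 6 (rewrite <- sumR_plus; apply sumR_ext; intros ? _).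
  ring.
Qed.

(** * Entropy stability of the Lax-Friedrichs flux *)

Lemma MVT_upper_bound (g dg : R -> R) a b M :
  a <= b -> (forall w, is_derive g w (dg w)) -> (forall w, a <= w <= b -> dg w <= M) ->
  g b - g a <= M * (b - a).
Proof.
  intros Hab D B. destruct (MVT_gen g a b dg) as [c [Hc E]].
  - intros; apply D.
  - intros. apply continuity_pt_filterlim. eapply is_derive_continuous, D.
  - rewrite Rmin_left, Rmax_right in Hc by lra. rewrite E.
    apply Rmult_le_compat_r; [lra | apply B; lra].
Qed.

Section Trapezoid.
Variables (f f' F : R -> R) (alpha : R).
Hypotheses (Hf : forall w, is_derive f w (f' w)) (HF : forall w, is_derive F w (f w)).

Lemma trapezoid_error_le a b :
  a <= b -> (forall w, a <= w <= b -> Rabs (f' w) <= alpha) ->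
  F b - F a - (b - a) * (f a + f b) / 2 <= alpha / 2 * ((b - a) * (b - a)).
Proof.
  intros Hab B.
  (* psi' s = (f s - f a) / 2 - (s - a) f' s / 2 - alpha (s - a), and each of the first
     two terms is at most alpha (s - a) / 2 *)
  set (psi := fun s => F s - F a - (s - a) * (f a + f s) / 2 - alpha / 2 * ((s - a) * (s - a))).
  assert (H : psi b - psi a <= 0 * (b - a)).
  { apply (MVT_upper_bound psi
      (fun s => f s - (f a + f s) / 2 - (s - a) * f' s / 2 - alpha * (s - a))); auto.
    - intros w. unfold psi. solve_derive.
    - intros w Hw.
      assert (Hfw : f w - f a <= alpha * (w - a)).
      { apply (MVT_upper_bound f f' a w alpha); [lra | exact Hf |].
        intros v Hv. specialize (B v ltac:(lra)). apply Rabs_le_between in B. lra. }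
      specialize (B w Hw). apply Rabs_le_between in B.
      assert (- f' w * (w - a) <= alpha * (w - a)) by (apply Rmult_le_compat_r; lra).
      lra. }
  unfold psi in H. lra.
Qed.

End Trapezoid.

Lemma LF_entropy_stable (f f' F : R -> R) alpha a b :
  (forall w, is_derive f w (f' w)) -> (forall w, is_derive F w (f w)) ->
  (forall w, Rmin a b <= w <= Rmax a b -> Rabs (f' w) <= alpha) ->
  F b - F a - LF f alpha a b * (b - a) <= 0.
Proof.
  intros Hf HF B. unfold LF.
  assert (0 <= alpha).
  { apply Rle_trans with (Rabs (f' a)); [apply Rabs_pos|].
    apply B; split; [apply Rmin_l | apply Rmax_l]. }
  assert (0 <= alpha * ((b - a) * (b - a))) by (apply Rmult_le_pos; [lra | apply Rle_0_sqr]).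
  destruct (Rle_dec a b) as [Hab|Hab].
  - rewrite Rmin_left, Rmax_right in B by lra.
    pose proof (trapezoid_error_le f f' F alpha Hf HF a b Hab B). lra.
  - rewrite Rmin_right, Rmax_left in B by lra.
    assert (B' : forall w, b <= w <= a -> Rabs (- f' w) <= alpha)
      by (intros; rewrite Rabs_Ropp; auto).
    pose proof (trapezoid_error_le (fun s => - f s) (fun s => - f' s) (fun s => - F s) alpha
      (fun w => is_derive_Ropp f w _ (Hf w)) (fun w => is_derive_Ropp F w _ (HF w)) b a
      ltac:(lra) B').
    lra.
Qed.

(** * The energy estimate *)

Section EnergyEstimate.
Variables (k Nx Ny : nat) (xs ys : nat -> R) (f f' F : R -> R) (alpha : R) (U : dgfun).
Hypotheses (HNx : (1 <= Nx)%nat) (HNy : (1 <= Ny)%nat).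
Hypothesis Hxs : forall i, (i < Nx)%nat -> xs i < xs (S i).
Hypothesis Hys : forall j, (j < Ny)%nat -> ys j < ys (S j).
Hypothesis Hf : forall w, is_derive f w (f' w).
Hypothesis Hf' : forall w, continuous f' w.
Hypothesis HF : forall w, is_derive F w (f w).
Hypothesis Halpha : forall w, in_value_range k Nx Ny xs ys U w -> Rabs (f' w) <= alpha.

(* Both are picked up from the context by [solve_continuous]. *)
Let Hfc : forall w, continuous f w := fun w => is_derive_continuous f w _ (Hf w).
Let HFc : forall w, continuous F w := fun w => is_derive_continuous F w _ (HF w).

Local Notation u := (ev k U).
Local Notation nx := (nextI Nx).
Local Notation px := (prevI Nx).
Local Notation ny := (nextI Ny).
Local Notation py := (prevI Ny).

Section Cell.
Variables p q : nat.
Local Notation xl := (xs p).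
Local Notation xr := (xs (S p)).
Local Notation yl := (ys q).
Local Notation yr := (ys (S q)).
Local Notation pR := (nx p).
Local Notation pL := (px p).
Local Notation qR := (ny q).
Local Notation qL := (py q).
Local Notation xlR := (xs (nx p)).
Local Notation xrL := (xs (S (px p))).
Local Notation ylR := (ys (ny q)).
Local Notation yrL := (ys (S (py q))).

(* [scheme_rhs U U] on one cell, split into the terms coming from f(u)_x, u_xxx and
   u_xyy. *)
Definition conv_cell :=
  Int2 xl xr yl yr (fun x y => f (u p q 0 0 x y) * u p q 1 0 x y)
  - RInt (fun y => LF f alpha (u pR q 0 0 xlR y) (u p q 0 0 xr y) * u p q 0 0 xr y
                 - LF f alpha (u p q 0 0 xl y) (u pL q 0 0 xrL y) * u p q 0 0 xl y) yl yr.

Definition uxxx_cell :=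
  Int2 xl xr yl yr (fun x y => u p q 0 0 x y * u p q 3 0 x y)
  - RInt (fun y => u pR q 2 0 xlR y * u p q 0 0 xr y - u p q 2 0 xl y * u p q 0 0 xl y) yl yr
  + RInt (fun y => u pR q 1 0 xlR y * u p q 1 0 xr y - u p q 1 0 xl y * u p q 1 0 xl y) yl yr
  - RInt (fun y => u p q 0 0 xr y * u p q 2 0 xr y - u pL q 0 0 xrL y * u p q 2 0 xl y) yl yr.

Definition uxyy_cell :=
  Int2 xl xr yl yr (fun x y => u p q 0 0 x y * u p q 1 2 x y)
  + RInt (fun x => u p qR 0 1 x ylR * u p q 1 0 x yr - u p q 0 1 x yl * u p q 1 0 x yl) xl xr
  + ( - u p qR 0 1 xr ylR * u p q 0 0 xr yr
      + u pL qR 0 1 xrL ylR * u p q 0 0 xl yr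
      + u p q 0 1 xr yl * u p q 0 0 xr yl
      - u pL q 0 1 xrL yl * u p q 0 0 xl yl)
  - RInt (fun y => u pR q 0 0 xlR y * u p q 0 2 xr y - u p q 0 0 xl y * u p q 0 2 xl y) yl yr
  + ( u pR q 0 0 xlR yr * u p q 0 1 xr yr
      - u pR qL 0 0 xlR yrL * u p q 0 1 xr yl
      - u p q 0 0 xl yr * u p q 0 1 xl yr
      + u p qL 0 0 xl yrL * u p q 0 1 xl yl)
  - RInt (fun x => u p q 0 0 x yr * u p q 1 1 x yr - u p qL 0 0 x yrL * u p q 1 1 x yl) xl xr.

(* After integration by parts these terms live on the edges of the cell; [*_right p q]
   and [*_left (nx p) q] sit on the same vertical edge. *)
Definition conv_right :=
  RInt (fun y => F (u p q 0 0 xr y)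
                 - LF f alpha (u pR q 0 0 xlR y) (u p q 0 0 xr y) * u p q 0 0 xr y) yl yr.
Definition conv_left :=
  RInt (fun y => LF f alpha (u p q 0 0 xl y) (u pL q 0 0 xrL y) * u p q 0 0 xl y
                 - F (u p q 0 0 xl y)) yl yr.

Lemma conv_cell_split : conv_cell = conv_right + conv_left.
Proof.
  unfold conv_cell, conv_right, conv_left. rewrite (Int2_FTC_x (fun x y => F (u p q 0 0 x y))).
  - unfold LF. merge_RInt. apply RInt_ext_R; intros; ring.
  - apply continuous2_comp; [exact HFc | apply continuous2_ev].
  - intros. solve_derive.
  - apply C1_x_mult; [apply (C1_x_comp f f') |]; auto; apply C1_x_ev.
Qed.

Definition uxxx_right :=
  RInt (fun y => - (u p q 1 0 xr y * u p q 1 0 xr y) / 2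
                 - u pR q 2 0 xlR y * u p q 0 0 xr y + u pR q 1 0 xlR y * u p q 1 0 xr y) yl yr.
Definition uxxx_left :=
  RInt (fun y => - (u p q 1 0 xl y * u p q 1 0 xl y) / 2 + u pL q 0 0 xrL y * u p q 2 0 xl y) yl yr.

Lemma uxxx_cell_split : uxxx_cell = uxxx_right + uxxx_left.
Proof.
  unfold uxxx_cell, uxxx_right, uxxx_left.
  rewrite (Int2_FTC_x
    (fun x y => u p q 0 0 x y * u p q 2 0 x y - u p q 1 0 x y * u p q 1 0 x y / 2)).
  - merge_RInt. apply RInt_ext_R; intros; field.
  - apply continuous2_minus; [| apply continuous2_div_const];
      apply continuous2_mult; apply continuous2_ev.
  - intros. solve_derive.
  - apply C1_x_mult; apply C1_x_ev.
Qed.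

Definition uxyy_right :=
  RInt (fun y => - (u p q 0 1 xr y * u p q 0 1 xr y) / 2 + u pR q 0 1 xlR y * u p q 0 1 xr y) yl yr.
Definition uxyy_left := RInt (fun y => - (u p q 0 1 xl y * u p q 0 1 xl y) / 2) yl yr.
Definition uxyy_top := RInt (fun x => u p qR 0 1 x ylR * u p q 1 0 x yr) xl xr.
Definition uxyy_bottom :=
  RInt (fun x => - (u p q 0 0 x yl * u p q 1 1 x yl) - u p q 0 1 x yl * u p q 1 0 x yl
                 + u p qL 0 0 x yrL * u p q 1 1 x yl) xl xr.
Definition uuy_vertical_jump (y : R) :=
  u pR q 0 0 xlR y * u p q 0 1 xr y - u p q 0 0 xl y * u p q 0 1 xl y.
Definition uxyy_points :=
    ( - u p qR 0 1 xr ylR * u p q 0 0 xr yr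
      + u pL qR 0 1 xrL ylR * u p q 0 0 xl yr
      + u p q 0 1 xr yl * u p q 0 0 xr yl
      - u pL q 0 1 xrL yl * u p q 0 0 xl yl)
  + ( u pR q 0 0 xlR yr * u p q 0 1 xr yr
      - u pR qL 0 0 xlR yrL * u p q 0 1 xr yl
      - u p q 0 0 xl yr * u p q 0 1 xl yr
      + u p qL 0 0 xl yrL * u p q 0 1 xl yl)
  - (uuy_vertical_jump yr - uuy_vertical_jump yl).

Lemma Int2_u_uxyy : Int2 xl xr yl yr (fun x y => u p q 0 0 x y * u p q 1 2 x y) =
  RInt (fun x => u p q 0 0 x yr * u p q 1 1 x yr - u p q 0 0 x yl * u p q 1 1 x yl) xl xr
  - RInt (fun y => u p q 0 1 xr y * u p q 0 1 xr y / 2 - u p q 0 1 xl y * u p q 0 1 xl y / 2) yl yr.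
Proof.
  assert (C : C1_x (fun x y => u p q 0 1 x y * u p q 1 1 x y)) by (apply C1_x_mult; apply C1_x_ev).
  transitivity (RInt (fun x => u p q 0 0 x yr * u p q 1 1 x yr - u p q 0 0 x yl * u p q 1 1 x yl) xl xr
    - Int2 xl xr yl yr (fun x y => u p q 0 1 x y * u p q 1 1 x y)).
  - unfold Int2.
    rewrite RInt_merge_minus by (solve_continuous || (intros; apply continuous_RInt_param2, C)).
    apply RInt_ext_R. intros x. cbv beta.
    rewrite <- (RInt_FTC (fun y => u p q 0 0 x y * u p q 1 1 x y)
      (fun y => u p q 0 1 x y * u p q 1 1 x y + u p q 0 0 x y * u p q 1 2 x y)).
    + merge_RInt. apply RInt_ext_R; intros; ring.
    + intros. solve_derive.
    + solve_continuous.
  - rewrite (Int2_FTC_x (fun x y => u p q 0 1 x y * u p q 0 1 x y / 2)); auto.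
    + apply continuous2_div_const, continuous2_mult; apply continuous2_ev.
    + intros. solve_derive.
Qed.

Lemma RInt_u_uyy_vertical :
  RInt (fun y => u pR q 0 0 xlR y * u p q 0 2 xr y - u p q 0 0 xl y * u p q 0 2 xl y) yl yr
  = (uuy_vertical_jump yr - uuy_vertical_jump yl)
    - RInt (fun y => u pR q 0 1 xlR y * u p q 0 1 xr y - u p q 0 1 xl y * u p q 0 1 xl y) yl yr.
Proof.
  unfold uuy_vertical_jump.
  rewrite <- (RInt_FTC (fun y => u pR q 0 0 xlR y * u p q 0 1 xr y - u p q 0 0 xl y * u p q 0 1 xl y)
    (fun y => u pR q 0 1 xlR y * u p q 0 1 xr y + u pR q 0 0 xlR y * u p q 0 2 xr y
      - (u p q 0 1 xl y * u p q 0 1 xl y + u p q 0 0 xl y * u p q 0 2 xl y))).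
  - merge_RInt. apply RInt_ext_R; intros; ring.
  - intros. solve_derive.
  - solve_continuous.
Qed.

Lemma uxyy_cell_split :
  uxyy_cell = uxyy_right + uxyy_left + uxyy_top + uxyy_bottom + uxyy_points.
Proof.
  unfold uxyy_cell. rewrite Int2_u_uxyy, RInt_u_uyy_vertical.
  assert (Ey : RInt (fun y => u pR q 0 1 xlR y * u p q 0 1 xr y - u p q 0 1 xl y * u p q 0 1 xl y) yl yr
    - RInt (fun y => u p q 0 1 xr y * u p q 0 1 xr y / 2 - u p q 0 1 xl y * u p q 0 1 xl y / 2) yl yr
    = uxyy_right + uxyy_left).
  { unfold uxyy_right, uxyy_left. merge_RInt. apply RInt_ext_R; intros; field. }
  assert (Ex : RInt (fun x => u p q 0 0 x yr * u p q 1 1 x yr - u p q 0 0 x yl * u p q 1 1 x yl) xl xr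
    + RInt (fun x => u p qR 0 1 x ylR * u p q 1 0 x yr - u p q 0 1 x yl * u p q 1 0 x yl) xl xr
    - RInt (fun x => u p q 0 0 x yr * u p q 1 1 x yr - u p qL 0 0 x yrL * u p q 1 1 x yl) xl xr
    = uxyy_top + uxyy_bottom).
  { unfold uxyy_top, uxyy_bottom. merge_RInt. apply RInt_ext_R; intros; ring. }
  unfold uxyy_points. lra.
Qed.

End Cell.

Lemma scheme_rhs_cells : scheme_rhs k Nx Ny xs ys f alpha U U =
  sum2 Nx Ny (fun p q => conv_cell p q + uxxx_cell p q + uxyy_cell p q).
Proof.
  apply sumR_ext; intros p _. apply sumR_ext; intros q _.
  unfold conv_cell, uxxx_cell, uxyy_cell. cbv zeta. ring.
Qed.

Lemma in_value_range_between P Q X Y P' Q' X' Y' w :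
  (P < Nx)%nat -> (Q < Ny)%nat -> (P' < Nx)%nat -> (Q' < Ny)%nat ->
  xs P <= X <= xs (S P) -> ys Q <= Y <= ys (S Q) ->
  xs P' <= X' <= xs (S P') -> ys Q' <= Y' <= ys (S Q') ->
  Rmin (u P Q 0 0 X Y) (u P' Q' 0 0 X' Y') <= w <= Rmax (u P Q 0 0 X Y) (u P' Q' 0 0 X' Y') ->
  in_value_range k Nx Ny xs ys U w.
Proof.
  intros. destruct (Rle_dec (u P Q 0 0 X Y) (u P' Q' 0 0 X' Y')).
  - rewrite Rmin_left, Rmax_right in * by lra. exists P, Q, X, Y, P', Q', X', Y'. tauto.
  - rewrite Rmin_right, Rmax_left in * by lra. exists P', Q', X', Y', P, Q, X, Y. tauto.
Qed.

Lemma conv_interface_le0 p q : (p < Nx)%nat -> (q < Ny)%nat ->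
  conv_right p q + conv_left (nx p) q <= 0.
Proof.
  intros Hp Hq. pose proof (Hxs p Hp). pose proof (Hxs (nx p) (nextI_lt Nx p HNx)).
  unfold conv_right, conv_left. rewrite prevI_nextI by exact Hp. unfold LF. merge_RInt.
  apply RInt_nonpos; [pose proof (Hys q Hq); lra | solve_continuous |]. intros y Hy.
  set (up := u (nx p) q 0 0 (xs (nx p)) y). set (um := u p q 0 0 (xs (S p)) y).
  assert (B : forall w, Rmin up um <= w <= Rmax up um -> Rabs (f' w) <= alpha).
  { intros w Hw. apply Halpha.
    apply (in_value_range_between (nx p) q (xs (nx p)) y p q (xs (S p)) y w);
      solve [exact Hw | apply nextI_lt; exact HNx | lra | assumption]. }
  pose proof (LF_entropy_stable f f' F alpha up um Hf HF B) as E. unfold LF in E. lra.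
Qed.

Lemma uxxx_interface_le0 p q : (p < Nx)%nat -> (q < Ny)%nat ->
  uxxx_right p q + uxxx_left (nx p) q <= 0.
Proof.
  intros Hp Hq. unfold uxxx_right, uxxx_left. rewrite prevI_nextI by exact Hp. merge_RInt.
  apply RInt_nonpos; [pose proof (Hys q Hq); lra | solve_continuous |]. intros y _.
  pose proof (Rle_0_sqr (u p q 1 0 (xs (S p)) y - u (nx p) q 1 0 (xs (nx p)) y)).
  unfold Rsqr in *. lra.
Qed.

Lemma uxyy_interface_le0 p q : (p < Nx)%nat -> (q < Ny)%nat ->
  uxyy_right p q + uxyy_left (nx p) q <= 0.
Proof.
  intros Hp Hq. unfold uxyy_right, uxyy_left. merge_RInt.
  apply RInt_nonpos; [pose proof (Hys q Hq); lra | solve_continuous |]. intros y _.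
  pose proof (Rle_0_sqr (u p q 0 1 (xs (S p)) y - u (nx p) q 0 1 (xs (nx p)) y)).
  unfold Rsqr in *. lra.
Qed.

Definition uxyy_horizontal p q :=
  u p (ny q) 0 1 (xs (S p)) (ys (ny q))
    * (u p q 0 0 (xs (S p)) (ys (S q)) - u p (ny q) 0 0 (xs (S p)) (ys (ny q)))
  - u p (ny q) 0 1 (xs p) (ys (ny q))
    * (u p q 0 0 (xs p) (ys (S q)) - u p (ny q) 0 0 (xs p) (ys (ny q))).

Lemma uxyy_top_bottom p q : (q < Ny)%nat ->
  uxyy_top p q + uxyy_bottom p (ny q) = uxyy_horizontal p q.
Proof.
  intros Hq. unfold uxyy_top, uxyy_bottom, uxyy_horizontal.
  rewrite prevI_nextI by exact Hq. merge_RInt.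
  rewrite (RInt_FTC (fun x => u p (ny q) 0 1 x (ys (ny q))
    * (u p q 0 0 x (ys (S q)) - u p (ny q) 0 0 x (ys (ny q))))).
  - ring.
  - intros. solve_derive.
  - solve_continuous.
Qed.

Definition corner_own_br p q := u p q 0 1 (xs (S p)) (ys q) * u p q 0 0 (xs (S p)) (ys q).
Definition corner_own_bl p q := u p q 0 1 (xs p) (ys q) * u p q 0 0 (xs p) (ys q).
Definition corner_below p q := u p q 0 1 (xs p) (ys q) * u p (py q) 0 0 (xs p) (ys (S (py q))).
Definition corner_diag p q :=
  u (px p) q 0 1 (xs (S (px p))) (ys q) * u p (py q) 0 0 (xs p) (ys (S (py q))).
Definition corner_left p q := u (px p) q 0 1 (xs (S (px p))) (ys q) * u p q 0 0 (xs p) (ys q).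

Lemma uxyy_corners_telescope p q : (p < Nx)%nat -> (q < Ny)%nat ->
  uxyy_horizontal p q + uxyy_points p q =
    (corner_own_br p q - corner_own_br p (ny q)) - (corner_own_bl p q - corner_own_bl p (ny q))
  + (corner_below p q - corner_below p (ny q)) - (corner_diag p q - corner_diag p (ny q))
  + (corner_diag p q - corner_diag (nx p) q) - (corner_left p q - corner_left (nx p) q).
Proof.
  intros Hp Hq. unfold uxyy_horizontal, uxyy_points, uuy_vertical_jump,
    corner_own_br, corner_own_bl, corner_below, corner_diag, corner_left.
  rewrite !prevI_nextI by assumption. ring.
Qed.

Lemma uxyy_boundary_sum :
  sum2 Nx Ny (fun p q => uxyy_top p q + uxyy_bottom p q) + sum2 Nx Ny uxyy_points = 0.
Proof.
  rewrite (sum2_pair_y Nx Ny HNy).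
  rewrite (sum2_ext Nx Ny _ uxyy_horizontal) by (intros; apply uxyy_top_bottom; assumption).
  rewrite <- sum2_plus.
  rewrite (sum2_ext Nx Ny _ _ (fun p q Hp Hq => uxyy_corners_telescope p q Hp Hq)).
  repeat (rewrite sum2_plus || rewrite sum2_minus).
  rewrite !(sum2_nextI_x Nx Ny HNx), !(sum2_nextI_y Nx Ny HNy). ring.
Qed.

Lemma conv_sum_le0 : sum2 Nx Ny conv_cell <= 0.
Proof.
  rewrite (sum2_ext Nx Ny _ (fun p q => conv_right p q + conv_left p q))
    by (intros; apply conv_cell_split).
  exact (sum2_interface_x_nonpos Nx Ny HNx _ _ conv_interface_le0).
Qed.

Lemma uxxx_sum_le0 : sum2 Nx Ny uxxx_cell <= 0.
Proof.
  rewrite (sum2_ext Nx Ny _ (fun p q => uxxx_right p q + uxxx_left p q))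
    by (intros; apply uxxx_cell_split).
  exact (sum2_interface_x_nonpos Nx Ny HNx _ _ uxxx_interface_le0).
Qed.

Lemma uxyy_sum_le0 : sum2 Nx Ny uxyy_cell <= 0.
Proof.
  rewrite (sum2_ext Nx Ny _ (fun p q => (uxyy_right p q + uxyy_left p q)
    + ((uxyy_top p q + uxyy_bottom p q) + uxyy_points p q)))
    by (intros; rewrite uxyy_cell_split; ring).
  rewrite sum2_plus, (sum2_plus Nx Ny (fun p q => uxyy_top p q + uxyy_bottom p q) uxyy_points).
  pose proof (sum2_interface_x_nonpos Nx Ny HNx _ _ uxyy_interface_le0).
  pose proof uxyy_boundary_sum. lra.
Qed.

Lemma scheme_rhs_diag_nonpos : scheme_rhs k Nx Ny xs ys f alpha U U <= 0.
Proof.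
  rewrite scheme_rhs_cells, !sum2_plus.
  pose proof conv_sum_le0. pose proof uxxx_sum_le0. pose proof uxyy_sum_le0. lra.
Qed.

End EnergyEstimate.

Theorem proposition2p1
  (k : nat)
  (f f' : R -> R)
  (Hf : forall w, is_derive f w (f' w))
  (Hf' : forall w, continuous f' w)
  (a b c d : R) (Nx Ny : nat) (xs ys : nat -> R)
  (HNx : (1 <= Nx)%nat) (HNy : (1 <= Ny)%nat)
  (Hxs : forall i, (i < Nx)%nat -> xs i < xs (S i))
  (Hys : forall j, (j < Ny)%nat -> ys j < ys (S j))
  (Ha : xs 0%nat = a) (Hb : xs Nx = b) (Hc : ys 0%nat = c) (Hd : ys Ny = d)
  (T : R) (alpha : R)
  (U : R -> dgfun) (Ut : R -> dgfun)
  (HU : forall t, 0 < t < T -> forall p q m n,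
      is_derive (fun s => U s p q m n) t (Ut t p q m n))
  (HUt : forall t, 0 < t < T -> forall p q m n,
      continuous (fun s => Ut s p q m n) t)
  (Halpha : forall t, 0 < t < T -> forall w,
      in_value_range k Nx Ny xs ys (U t) w -> Rabs (f' w) <= alpha)
  (Hscheme : forall t, 0 < t < T -> forall V : dgfun,
      l2ip k Nx Ny xs ys (Ut t) V = scheme_rhs k Nx Ny xs ys f alpha (U t) V) :
  forall t, 0 < t < T ->
    exists l, is_derive (fun s => l2ip k Nx Ny xs ys (U s) (U s)) t l /\ l <= 0.
Proof.
  intros t Ht.
  assert (HF : forall w, is_derive (fun z => RInt f 0 z) w (f w)).
  { apply RInt_antiderivative. intros w. eapply is_derive_continuous, Hf. }
  exists (l2ip k Nx Ny xs ys (Ut t) (U t) + l2ip k Nx Ny xs ys (U t) (Ut t)). split.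
  - apply l2ip_derive. intros. apply HU, Ht.
  - rewrite (l2ip_sym k Nx Ny xs ys (U t) (Ut t)), Hscheme by exact Ht.
    pose proof (scheme_rhs_diag_nonpos k Nx Ny xs ys f f' _ alpha (U t)
      HNx HNy Hxs Hys Hf Hf' HF (Halpha t Ht)).
    lra.
Qed.
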